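(* Let $n\ge 2$, $m\ge 1$ and consider a star junction in which pipes $P_1,\dots,P_n$ connect at a single node to pipes $P_{n+1},\dots,P_{n+m}$. Suppose real differentiable functions $p_{j,\ell},p_{j,r},q_{j,\ell},q_{j,r}$ ($j=1,\dots,n+m$) satisfy, for all $t$, \[ \dot p_{j,r}=c_j(q_{j,r}-q_{j,\ell}),\qquad \dot q_{j,\ell}=b_jp_{j,r}+d_jp_{j,\ell}+e_jq_{j,\ell}, \] and the junction constraints $p_{1,r}=\dots=p_{n,r}=p_{n+1,\ell}=\dots=p_{n+m,\ell}$ and $\sum_{k=1}^n q_{k,r}=\sum_{j=n+1}^{n+m}q_{j,\ell}$. Define \[ x=[p_{1,r},p_{n+1,r},\dots,p_{n+m,r},q_{1,\ell},\dots,q_{n+m,\ell}]^\top\in\mathbb R^{n+2m+1},\quad u=[p_{1,\ell},\dots,p_{n,\ell},q_{n+1,r},\dots,q_{n+m,r}]^\top\in\mathbb R^{n+m}, \] \[ y=[p_{n+1,r},\dots,p_{n+m,r},q_{1,\ell},\dots,q_{n,\ell}]^\top\in\mathbb R^{n+m}. \] Then $\dot x=Ax+Bu$, $y=Cx$, where, with row blocks and column blocks of $A$ of sizes $(1,m,n,m)$, \[ A=\begin{bmatrix} 0&\mathbf 0_m^\top&-a\mathbf 1_n^\top&a\mathbf 1_m^\top\\ \mathbf 0_m&\mathbf 0_{m,m}&\mathbf 0_{m,n}&-\operatorname{diag}(c_{n+1},\dots,c_{n+m})\\ (b_1,\dots,b_n)^\top&\mathbf 0_{n,m}&\operatorname{diag}(e_1,\dots,e_n)&\mathbf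 0_{n,m}\\ (d_{n+1},\dots,d_{n+m})^\top&\operatorname{diag}(b_{n+1},\dots,b_{n+m})&\mathbf 0_{m,n}&\operatorname{diag}(e_{n+1},\dots,e_{n+m}) \end{bmatrix}, \] \[ B=\begin{bmatrix} \mathbf 0_n^\top&\mathbf 0_m^\top\\ \mathbf 0_{m,n}&\operatorname{diag}(c_{n+1},\dots,c_{n+m})\\ \operatorname{diag}(d_1,\dots,d_n)&\mathbf 0_{n,m}\\ \mathbf 0_{m,n}&\mathbf 0_{m,m} \end{bmatrix},\qquad C=\begin{bmatrix}\mathbf 0_{n+m}&I_{n+m}&\mathbf 0_{n+m,m}\end{bmatrix}, \] and $a=c_1\left(\sum_{j=1}^n\prod_{i=1,\,i\neq j}^n c_i\right)^{-1}\prod_{i=2}^n c_i$.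
   Context: Linearized isothermal one-dimensional pipe flow model: $p$ pressure, $q$ mass flow, subscripts $\ell,r$ the left ($x=0$) and right ($x=L_j$) ends of pipe $P_j$. Coefficients: $c_j=-\frac{R_sT_0z_0}{A_jL_j}$, $b_j=-\frac{A_j}{L_j}$, $d_j=\frac{A_j}{L_j}+\frac{\lambda_j R_sT_0z_0}{2D_jA_j}\frac{q_{ss,j}|q_{ss,j}|}{p_{\ell,ss,j}^2}-\frac{A_jgh_j}{R_sT_0z_0L_j}$, $e_j=-\frac{\lambda_j R_sT_0z_0}{D_jA_j}\frac{|q_{ss,j}|}{p_{\ell,ss,j}}$, with positive constants $R_s,T_0,z_0$, gravity $g$, and per-pipe area $A_j>0$, length $L_j>0$, diameter $D_j>0$, friction factor $\lambda_j$, elevation difference $h_j$, nominal flow $q_{ss,j}>0$, nominal left pressure $p_{\ell,ss,j}>0$; hence all $c_j<0$. $\mathbf 0_i$, $\mathbf 0_{i,j}$ are zero vectors/matrices (a vector $\mathbf 0_i$ used as a block is a column), $\mathbf 1_i$ the all-ones column vector, $I_k$ the identity. *)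

From HB Require Import structures.
From mathcomp Require Import all_boot all_order all_algebra.
From mathcomp Require Import all_classical all_reals all_analysis.
Set Implicit Arguments.
Unset Strict Implicit.
Unset Printing Implicit Defensive.
Import Order.TTheory GRing.Theory Num.Theory.
Local Open Scope ring_scope.

(* Pipes are indexed by 'I_(n+m): pipe j (1 <= j <= n) is lshift m (j-1),
   pipe n+j (1 <= j <= m) is rshift n (j-1). *)

Definition coef_c (R : realType) (k : nat) (Rs T0 z0 : R) (A L : 'I_k -> R)
  (j : 'I_k) : R := - (Rs * T0 * z0) / (A j * L j).
Definition coef_b (R : realType) (k : nat) (A L : 'I_k -> R) (j : 'I_k) : R :=
  - (A j / L j).
Definition coef_d (R : realType) (k : nat) (Rs T0 z0 g : R)
  (A L D lam h qss pss : 'I_k -> R) (j : 'I_k) : R :=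
  A j / L j
  + (lam j * Rs * T0 * z0) / (2 * D j * A j) * (qss j * `|qss j|) / (pss j ^+ 2)
  - (A j * g * h j) / (Rs * T0 * z0 * L j).
Definition coef_e (R : realType) (k : nat) (Rs T0 z0 : R)
  (A D lam qss pss : 'I_k -> R) (j : 'I_k) : R :=
  - ((lam j * Rs * T0 * z0) / (D j * A j)) * (`|qss j| / pss j).

Definition pipe1 (n m : nat) (hn : (1 < n)%N) : 'I_(n + m) :=
  lshift m (Ordinal (ltnW hn)).

Definition vderiv (R : realType) (k : nat) (f : R -> 'cV[R]_k) (t : R) : 'cV[R]_k :=
  \col_i (derive1 (fun s => f s i ord0) t).

Definition a_coef (R : realType) (n m : nat) (hn : (1 < n)%N) (c : 'I_(n + m) -> R) : R :=
  c (pipe1 m hn)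
  * (\sum_(j < n) \prod_(i < n | i != j) c (lshift m i))^-1
  * \prod_(i < n | (0 < i)%N) c (lshift m i).

Definition state_x (R : realType) (n m : nat) (hn : (1 < n)%N)
  (p_r q_l : 'I_(n + m) -> R -> R) (t : R) : 'cV[R]_(1 + m + n + m) :=
  col_mx (col_mx (col_mx (const_mx (p_r (pipe1 m hn) t))
                         (\col_(j < m) p_r (rshift n j) t))
                 (\col_(k < n) q_l (lshift m k) t))
         (\col_(j < m) q_l (rshift n j) t).

Definition input_u (R : realType) (n m : nat)
  (p_l q_r : 'I_(n + m) -> R -> R) (t : R) : 'cV[R]_(n + m) :=
  col_mx (\col_(k < n) p_l (lshift m k) t) (\col_(j < m) q_r (rshift n j) t).

Definition output_y (R : realType) (n m : nat)
  (p_r q_l : 'I_(n + m) -> R -> R) (t : R) : 'cV[R]_(m + n) :=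
  col_mx (\col_(j < m) p_r (rshift n j) t) (\col_(k < n) q_l (lshift m k) t).

Definition sysA (R : realType) (n m : nat) (a : R) (b c d e : 'I_(n + m) -> R)
  : 'M[R]_(1 + m + n + m) :=
  let dR f := diag_mx (\row_(j < m) f (rshift n j)) in
  let dL f := diag_mx (\row_(k < n) f (lshift m k)) in
  col_mx (col_mx (col_mx
    (row_mx (row_mx (row_mx (0 : 'M[R]_(1, 1)) (0 : 'M[R]_(1, m)))
                    (const_mx (- a) : 'M[R]_(1, n))) (const_mx a : 'M[R]_(1, m)))
    (row_mx (row_mx (row_mx (0 : 'M[R]_(m, 1)) (0 : 'M[R]_(m, m))) (0 : 'M[R]_(m, n)))
            (- dR c)))
    (row_mx (row_mx (row_mx (\col_(k < n) b (lshift m k)) (0 : 'M[R]_(n, m))) (dL e))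
            (0 : 'M[R]_(n, m))))
    (row_mx (row_mx (row_mx (\col_(j < m) d (rshift n j)) (dR b)) (0 : 'M[R]_(m, n)))
            (dR e)).

Definition sysB (R : realType) (n m : nat) (c d : 'I_(n + m) -> R)
  : 'M[R]_(1 + m + n + m, n + m) :=
  col_mx (col_mx (col_mx
    (row_mx (0 : 'M[R]_(1, n)) (0 : 'M[R]_(1, m)))
    (row_mx (0 : 'M[R]_(m, n)) (diag_mx (\row_(j < m) c (rshift n j)))))
    (row_mx (diag_mx (\row_(k < n) d (lshift m k))) (0 : 'M[R]_(n, m))))
    (row_mx (0 : 'M[R]_(m, n)) (0 : 'M[R]_(m, m))).

Definition sysC (R : realType) (n m : nat) : 'M[R]_(m + n, 1 + (m + n) + m) :=
  row_mx (row_mx (0 : 'M[R]_(m + n,  1)) (1%:M : 'M[R]_(m + n))) (0 : 'M[R]_(m + n,  m)).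

From HB Require Import structures.
From mathcomp Require Import all_boot all_order all_algebra.
From mathcomp Require Import all_classical all_reals all_analysis.
From mathcomp Require Import ring.
Set Implicit Arguments.
Unset Strict Implicit.
Unset Printing Implicit Defensive.
Import Order.TTheory GRing.Theory Num.Theory.
Local Open Scope ring_scope.

(* The ODEs of the pipes and the junction constraints give every row of the
   system directly, except the one for the junction pressure p := p_{1,r}.
   Since all incoming pipes share the right pressure p, each of them yields
   q_{k,r} = q_{k,l} + p'/c_k; summing and using the flow balance gives
   p' * \sum_k 1/c_k = \sum_out q_l - \sum_in q_l.  The sum is nonzero because
   all c_k < 0, and a = (\sum_k 1/c_k)^-1 because
   \sum_j \prod_(i != j) c_i = (\prod_i c_i) * \sum_i 1/c_i. *)

Lemma sumr_lt0 (R : numDomainType) (I : finType) (i0 : I) (F : I -> R) :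
  (forall i, F i < 0) -> \sum_i F i < 0.
Proof.
move=> F_lt0; rewrite (bigD1 i0) //=; apply: le_lt_trans (F_lt0 i0).
by rewrite gerDl; apply: sumr_le0 => i _; exact: ltW.
Qed.

Lemma sum_prod_neq (F : fieldType) n (f : 'I_n -> F) :
  (forall i, f i != 0) ->
  \sum_j \prod_(i | i != j) f i = (\prod_i f i) * \sum_i (f i)^-1.
Proof.
move=> f_neq0; rewrite mulr_sumr; apply: eq_bigr => j _.
by rewrite [in RHS](bigD1 j) //= mulrAC divff ?mul1r.
Qed.

Lemma a_coefE (R : realType) n m (hn : (1 < n)%N) (c : 'I_(n + m) -> R) :
  (forall k : 'I_n, c (lshift m k) != 0) ->
  a_coef hn c = (\sum_(k < n) (c (lshift m k))^-1)^-1.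
Proof.
move=> c_neq0; pose P := \prod_(k < n) c (lshift m k).
have head_tail : c (pipe1 m hn) * \prod_(k < n | (0 < k)%N) c (lshift m k) = P.
  rewrite /P [RHS](bigD1 (Ordinal (ltnW hn))) //=; congr (_ * _).
  by apply: eq_bigl => k /=; rewrite lt0n -val_eqE.
have P_neq0 : P != 0 by apply/prodf_neq0 => k _.
rewrite /a_coef sum_prod_neq // mulrAC head_tail invfM mulrA.
by rewrite divff // mul1r.
Qed.

Lemma node_balance (F : fieldType) n (c ql qr : 'I_n -> F) (dp : F) :
  (forall k, c k != 0) -> (forall k, dp = c k * (qr k - ql k)) ->
  \sum_k qr k = \sum_k ql k + dp * \sum_k (c k)^-1.
Proof.
move=> c_neq0 dpE; rewrite mulr_sumr -big_split /=; apply: eq_bigr => k _.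
by rewrite [in RHS](dpE k) mulrAC divff // mul1r addrC subrK.
Qed.

Lemma junction_pressure_derive (R : realType) n m (hn : (1 < n)%N)
    (c ql qr : 'I_(n + m) -> R) (dp : R) :
  (forall k : 'I_n, c (lshift m k) < 0) ->
  (forall k : 'I_n, dp = c (lshift m k) * (qr (lshift m k) - ql (lshift m k))) ->
  \sum_(k < n) qr (lshift m k) = \sum_(j < m) ql (rshift n j) ->
  dp = a_coef hn c * (\sum_(j < m) ql (rshift n j) - \sum_(k < n) ql (lshift m k)).
Proof.
move=> c_lt0 dpE flow; have c_neq0 k : c (lshift m k) != 0 := ltr0_neq0 (c_lt0 k).
have S_neq0 : \sum_(k < n) (c (lshift m k))^-1 != 0.
  apply: ltr0_neq0; apply: (sumr_lt0 (Ordinal (ltnW hn))) => k.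
  by rewrite invr_lt0.
rewrite a_coefE // -flow (node_balance c_neq0 dpE) addrAC subrr add0r.
by rewrite mulrC mulfK.
Qed.

Lemma coef_c_lt0 (R : realType) k (Rs T0 z0 : R) (A L : 'I_k -> R) j :
  0 < Rs -> 0 < T0 -> 0 < z0 -> 0 < A j -> 0 < L j -> coef_c Rs T0 z0 A L j < 0.
Proof.
by move=> *; rewrite /coef_c mulNr oppr_lt0 divr_gt0 ?mulr_gt0.
Qed.

Lemma vderiv_col_mx (R : realType) k1 k2 (f : R -> 'cV[R]_k1) (g : R -> 'cV[R]_k2) t :
  vderiv (fun s => col_mx (f s) (g s)) t = col_mx (vderiv f t) (vderiv g t).
Proof.
apply/matrixP => i j; rewrite /vderiv !mxE.
by case: (split_ordP i) => k ->; rewrite ?col_mxEu ?col_mxEd !mxE;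
  congr derive1; apply: funext => s; rewrite ?col_mxEu ?col_mxEd.
Qed.

Lemma vderiv_colE (R : realType) k (f : 'I_k -> R -> R) t :
  vderiv (fun s => \col_i f i s) t = \col_i derive1 (f i) t.
Proof.
by apply/matrixP => i j; rewrite !mxE; congr derive1; apply: funext => s; rewrite mxE.
Qed.

Lemma vderiv_const_mx (R : realType) (f : R -> R) t :
  vderiv (fun s => (const_mx (f s) : 'cV[R]_1)) t = const_mx (derive1 f t).
Proof.
by apply/matrixP => i j; rewrite !mxE; congr derive1; apply: funext => s; rewrite mxE.
Qed.

Lemma sysC_mul (R : realType) n m r (x0 : 'M[R]_(1, r)) (x1 : 'M[R]_(m, r))
    (x2 : 'M[R]_(n, r)) (x3 : 'M[R]_(m, r)) :
  sysC R n m *m col_mx (col_mx (col_mx x0 x1) x2) x3 = col_mx x1 x2.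
Proof.
have col_mxA1 : col_mx (col_mx x0 x1) x2 = col_mx x0 (col_mx x1 x2) :> 'M[R]_(1 + (m + n), r).
  by rewrite col_mxA castmx_id.
by rewrite /sysC mul_row_col mul0mx addr0 col_mxA1 mul_row_col mul0mx add0r mul1mx.
Qed.

Lemma sys_rhsE (R : realType) n m (a p : R) (b c d e : 'I_(n + m) -> R)
    (pr_out ql_in ql_out pl_in qr_out : 'I_(n + m) -> R) :
  sysA a b c d e *m
    col_mx (col_mx (col_mx (const_mx p) (\col_(j < m) pr_out (rshift n j)))
                   (\col_(k < n) ql_in (lshift m k)))
           (\col_(j < m) ql_out (rshift n j))
  + sysB c d *m col_mx (\col_(k < n) pl_in (lshift m k)) (\col_(j < m) qr_out (rshift n j))
  = col_mx (col_mx (col_mx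
      (const_mx (a * (\sum_(j < m) ql_out (rshift n j) - \sum_(k < n) ql_in (lshift m k))))
      (\col_(j < m) (c (rshift n j) * (qr_out (rshift n j) - ql_out (rshift n j)))))
      (\col_(k < n) (b (lshift m k) * p + d (lshift m k) * pl_in (lshift m k)
                     + e (lshift m k) * ql_in (lshift m k))))
      (\col_(j < m) (b (rshift n j) * pr_out (rshift n j) + d (rshift n j) * p
                     + e (rshift n j) * ql_out (rshift n j))).
Proof.
rewrite /sysA /sysB !mul_col_mx !mul_row_col !mul0mx ?add0r ?addr0 !add_col_mx ?add0r ?addr0.
rewrite mulNmx !mul_diag_mx; congr col_mx; [congr col_mx; [congr col_mx|] |];
  apply/matrixP => i j; rewrite !mxE ?big_ord1 ?mxE.
- rewrite (eq_bigr (fun k => - a * ql_in (lshift m k))); last by move=> k _; rewrite !mxE.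
  rewrite (eq_bigr (fun j => a * ql_out (rshift n j))); last by move=> k _; rewrite !mxE.
  rewrite -!mulr_sumr; ring.
- ring.
- ring.
- ring.
Qed.

Theorem corollary4 (R : realType) (n m : nat) (hn : (1 < n)%N) (hm : (0 < m)%N)
  (Rs T0 z0 g : R) (A L D lam h qss pss : 'I_(n + m) -> R)
  (hRs : 0 < Rs) (hT0 : 0 < T0) (hz0 : 0 < z0)
  (hA : forall j, 0 < A j) (hL : forall j, 0 < L j) (hD : forall j, 0 < D j)
  (hqss : forall j, 0 < qss j) (hpss : forall j, 0 < pss j)
  (p_l p_r q_l q_r : 'I_(n + m) -> R -> R)
  (dp_l : forall j t, derivable (p_l j) t 1)
  (dp_r : forall j t, derivable (p_r j) t 1)
  (dq_l : forall j t, derivable (q_l j) t 1)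
  (dq_r : forall j t, derivable (q_r j) t 1)
  (ode_p : forall j t,
     derive1 (p_r j) t = coef_c Rs T0 z0 A L j * (q_r j t - q_l j t))
  (ode_q : forall j t,
     derive1 (q_l j) t = coef_b A L j * p_r j t
                     + coef_d Rs T0 z0 g A L D lam h qss pss j * p_l j t
                     + coef_e Rs T0 z0 A D lam qss pss j * q_l j t)
  (junc_p1 : forall t (k : 'I_n), p_r (lshift m k) t = p_r (pipe1 m hn) t)
  (junc_p2 : forall t (j : 'I_m), p_l (rshift n j) t = p_r (pipe1 m hn) t)
  (junc_q : forall t, \sum_(k < n) q_r (lshift m k) t = \sum_(j < m) q_l (rshift n j) t) :
  let c := coef_c Rs T0 z0 A L in
  let b := coef_b A L in
  let d := coef_d Rs T0 z0 g A L D lam h qss pss in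
  let e := coef_e Rs T0 z0 A D lam qss pss in
  let a := a_coef hn c in
  let x := state_x hn p_r q_l in
  let u := input_u p_l q_r in
  let y := output_y p_r q_l in
  forall t : R,
    vderiv x t = sysA a b c d e *m x t + sysB c d *m u t
    /\ y t = sysC R n m *m x t.
Proof.
move=> c b d e a x u y t.
split; last by rewrite /y /x /state_x sysC_mul.
have c_lt0 j : c j < 0 := coef_c_lt0 hRs hT0 hz0 (hA j) (hL j).
have node : derive1 (p_r (pipe1 m hn)) t
    = a * (\sum_(j < m) q_l (rshift n j) t - \sum_(k < n) q_l (lshift m k) t).
  apply: (@junction_pressure_derive R n m hn c (q_l^~ t) (q_r^~ t) _ _ _ (junc_q t)).
    by move=> k; exact: c_lt0.
  move=> k; rewrite -ode_p; congr derive1.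
  by apply: funext => s; rewrite junc_p1.
rewrite /x /u /state_x /input_u !vderiv_col_mx vderiv_const_mx !vderiv_colE.
rewrite (@sys_rhsE R n m a (p_r (pipe1 m hn) t) b c d e (fun j => p_r j t) (fun j => q_l j t)
  (fun j => q_l j t) (fun j => p_l j t) (fun j => q_r j t)).
congr (col_mx (col_mx (col_mx _ _) _) _); apply/matrixP => i j; rewrite !mxE.
- exact: node.
- exact: ode_p.
- by rewrite ode_q junc_p1.
- by rewrite ode_q junc_p2.
Qed.
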